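(* Let $t,q\ge 1$ and $s_1,\dots,s_t\ge 2$ be integers, and let $G^*=K_1\vee (C_{s_1}\cup\cdots\cup C_{s_t}\cup qK_2)$, where $C_2$ denotes a digon (two parallel edges between the same two vertices). If $n$ is the number of vertices of $G^*$, then the largest $Q$-eigenvalue $\sigma_1(G^* )$ equals the largest root of $\lambda^3-(n+7)\lambda^2+(7n+8)\lambda-12n+4q+12$.
   Context: Multigraphs without loops are allowed: the degree of a vertex is the number of edges incident to it, and the $(u,v)$ entry of the adjacency matrix $A$ is the number of edges joining $u$ and $v$. $Q=A+D$ with $D$ the diagonal degree matrix; $\sigma_1$ denotes its largest eigenvalue. $K_1\vee H$ adds one vertex adjacent (by a single edge) to every vertex of $H$; $\cup$ is disjoint union; $qK_2$ is $q$ disjoint edges. *)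

From HB Require Import structures.
From mathcomp Require Import all_boot all_order all_algebra.
Set Implicit Arguments. Unset Strict Implicit. Unset Printing Implicit Defensive.
Import Order.TTheory GRing.Theory Num.Theory.
Local Open Scope ring_scope.

(* Vertex type of G* = K_1 v (C_{s_1} u ... u C_{s_t} u q K_2):
   None = the apex vertex of K_1;
   Some (inl (Tagged i j)) = vertex j of the cycle C_{s_i};
   Some (inr (p, b)) = endpoint b of the p-th copy of K_2. *)
Definition Gstar_vert (t : nat) (s : 'I_t -> nat) (q : nat) : finType :=
  option ({i : 'I_t & 'I_(s i)} + ('I_q * bool)).

(* number of edges of the cycle C_m (edges {k, k+1 mod m}, k < m) joining j and j';
   for m = 2 this gives the digon (two parallel edges). *)
Definition cyc_mult (m : nat) (j j' : 'I_m) : nat :=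
  #|[set k : 'I_m | ((val j == val k) && (val j' == ((val k).+1 %% m)%N))
                   || ((val j' == val k) && (val j == ((val k).+1 %% m)%N))]|.

Definition Gstar_adj (t : nat) (s : 'I_t -> nat) (q : nat)
  (u v : Gstar_vert s q) : nat :=
  match u, v with
  | None, None => 0
  | None, Some _ => 1
  | Some _, None => 1
  | Some (inl (existT i j)), Some (inl (existT i' j')) =>
      if i =P i' is ReflectT e then
        cyc_mult (ecast k 'I_(s k) e j) j'
      else 0
  | Some (inr (p, b)), Some (inr (p', b')) => ((p == p') && (b != b'))%N
  | _, _ => 0
  end.

Definition adjmx (R : nzRingType) (V : finType) (a : V -> V -> nat) : 'M[R]_#|V| :=
  \matrix_(i, j) (a (enum_val i) (enum_val j))%:R.
Definition degmx (R : nzRingType) (V : finType) (a : V -> V -> nat) : 'M[R]_#|V| :=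
  diag_mx (\row_i (\sum_(v : V) a (enum_val i) v)%:R).

Definition Qmx (R : nzRingType) (V : finType) (a : V -> V -> nat) : 'M[R]_#|V| :=
  adjmx R a + degmx R a.

Definition largest_eigenvalue {F : realFieldType} (n : nat) (M : 'M[F]_n) (x : F) : Prop :=
  eigenvalue M x /\ (forall y, eigenvalue M y -> y <= x).

Definition largest_root {F : realFieldType} (p : {poly F}) (x : F) : Prop :=
  root p x /\ (forall y, root p y -> y <= x).
Arguments adjmx R {V} a.
Arguments degmx R {V} a.
Arguments Qmx R {V} a.

From HB Require Import structures.
From mathcomp Require Import all_boot all_order all_algebra.
From mathcomp Require Import zify ring lra.
Import Order.TTheory GRing.Theory Num.Theory.
Local Open Scope ring_scope.

(* For a root y of the cubic p, weighting the apex by (y-5)(y-3), the cycle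
   vertices by y-3 and the K_2 vertices by y-5 gives a Q-eigenvector with
   eigenvalue y. Since p.[5] = -2 (s_1 + ... + s_t) < 0, p has a root r > 5,
   whose eigenvector is positive. A nonnegative matrix with a positive
   eigenvector for r has no eigenvalue above r (Collatz-Wielandt), so r is
   the largest Q-eigenvalue; and every root y > 5 of p is a Q-eigenvalue,
   hence y <= r. *)

Lemma big_option (R : nmodType) (T : finType) (F : option T -> R) :
  \sum_(u : option T) F u = F None + \sum_(x : T) F (Some x).
Proof.
by rewrite ![index_enum _]unlock [@Finite.enum in LHS]unlock/= big_cons big_map.
Qed.

(* Collatz-Wielandt: compare both eigen-equations at a coordinate [j]
   maximizing [|x_j| / z_j]. *)
Lemma nonneg_mx_eigenvalue_le (R : realFieldType) n (Q : 'M[R]_n)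
    (z : 'rV[R]_n) (rho mu : R) :
  (forall i j, 0 <= Q i j) -> (forall i, 0 < z 0 i) ->
  z *m Q = rho *: z -> eigenvalue Q mu -> mu <= rho.
Proof.
move=> Q_ge0 z_gt0 zQ /eigenvalueP[x xQ /rV0Pn[i0 xi0_neq0]].
pose ratio j := `|x 0 j| / z 0 j.
have [j _ ratio_max] :=
  @real_arg_maxP R _ i0 predT ratio isT (fun i _ => num_real (ratio i)).
set m := ratio j in ratio_max.
have x_le i : `|x 0 i| <= m * z 0 i by rewrite -ler_pdivrMr //; exact: ratio_max.
have xj : `|x 0 j| = m * z 0 j by rewrite /m /ratio divfK ?gt_eqF.
have m_gt0 : 0 < m.
  by apply: lt_le_trans (ratio_max i0 isT); rewrite divr_gt0 ?normr_gt0.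
have xj_gt0 : 0 < `|x 0 j| by rewrite xj mulr_gt0.
have coord (v : 'rV[R]_n) c : v *m Q = c *: v -> \sum_i v 0 i * Q i j = c * v 0 j.
  by move/matrixP/(_ 0 j); rewrite !mxE.
have : `|mu| * `|x 0 j| <= rho * `|x 0 j|.
  rewrite -normrM -(coord x mu xQ); apply: le_trans (ler_norm_sum _ _ _) _.
  apply: le_trans (_ : \sum_i m * (z 0 i * Q i j) <= _).
    apply: ler_sum => i _; rewrite normrM (ger0_norm (Q_ge0 _ _)) mulrA.
    by rewrite ler_wpM2r ?Q_ge0 ?x_le.
  by rewrite -mulr_sumr (coord z rho zQ) xj mulrCA.
rewrite ler_pM2r //; apply: le_trans.
by rewrite real_ler_norm ?num_real.
Qed.

Lemma Qmx_ge0 (R : numDomainType) (V : finType) (a : V -> V -> nat) i j :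
  0 <= Qmx R a i j.
Proof. by rewrite !mxE addr_ge0 ?mulrn_wge0 ?ler0n. Qed.

Lemma row_mul_Qmx (R : comNzRingType) (V : finType) (a : V -> V -> nat)
    (f : V -> R) j :
  (forall u v, a u v = a v u) ->
  ((\row_i f (enum_val i)) *m Qmx R a) 0 j =
  \sum_u f u * (a (enum_val j) u)%:R + f (enum_val j) * (\sum_u a (enum_val j) u)%:R.
Proof.
move=> a_sym; rewrite !mxE; under [LHS]eq_bigr do rewrite !mxE mulrDr.
rewrite big_split /=; congr (_ + _).
  rewrite -(big_enum_val (A := V) (fun u => f u * (a u (enum_val j))%:R)).
  by apply: eq_big => // u _; rewrite a_sym.
rewrite (bigD1 j) //= eqxx mulr1n [X in _ + X]big1 ?addr0 // => i /negbTE->.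
by rewrite mulr0n mulr0.
Qed.

Lemma ordS_neq {m} (k : 'I_m) : (1 < m)%N -> ordS k != k.
Proof.
case: k => k lt_km m_gt1; apply/eqP => /(congr1 val) /=.
case: (ltngtP k.+1 m) => [lt|gt|eq]; last rewrite -eq modnn in m_gt1 *.
- by rewrite modn_small //; lia.
- lia.
- lia.
Qed.

Lemma cyc_multE m (j j' : 'I_m) : (1 < m)%N ->
  cyc_mult j j' = ((j' == ordS j) + (j == ordS j'))%N.
Proof.
move=> m_gt1; rewrite /cyc_mult -sum1_card.
transitivity (\sum_k ((j == k) && (j' == ordS k))
              + \sum_k ((j' == k) && (j == ordS k)))%N.
  rewrite -big_split big_mkcond; apply: eq_bigr => k _; rewrite inE.
  have valE (a b : 'I_m) : (val a == val b) = (a == b) by [].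
  have ordSE (a : 'I_m) : (val a == (val k).+1 %% m)%N = (a == ordS k) by [].
  rewrite !ordSE !valE; case: (eqVneq j' k) => [->|_]; last first.
    by rewrite /= orbF addn0; case: (_ && _).
  by rewrite [k == ordS k]eq_sym (negbTE (ordS_neq k m_gt1)) andbF; case: (_ == _).
congr (_ + _)%N; [rewrite (bigD1 j) | rewrite (bigD1 j')] => //=;
  by rewrite eqxx big1 ?addn0 // => k; rewrite eq_sym => /negbTE->.
Qed.

Lemma cyc_multC m (j j' : 'I_m) : cyc_mult j j' = cyc_mult j' j.
Proof. by apply: eq_card => k; rewrite !inE orbC. Qed.

Lemma sum_cyc_mult m (j : 'I_m) : (1 < m)%N -> (\sum_j' cyc_mult j j' = 2)%N.
Proof.
move=> m_gt1; under eq_bigr do rewrite cyc_multE //.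
have sum_eq1 (k : 'I_m) : (\sum_(i < m) (i == k : nat) = 1)%N.
  by rewrite (bigD1 k) //= eqxx big1 // => i /negbTE->.
rewrite big_split /=.
have -> : (\sum_i (j == ordS i) = \sum_i (i == j))%N.
  by rewrite [RHS](reindex_inj (@ordS_inj m)); apply: eq_bigr => i _; rewrite eq_sym.
by rewrite !sum_eq1.
Qed.

Section Gstar.
Variables (t q : nat) (s : 'I_t -> nat).
Local Notation V := (Gstar_vert s q).
Local Notation adj := (@Gstar_adj t s q).
Local Notation ncyc := #|{: {i : 'I_t & 'I_(s i)}}|.

Lemma Gstar_adjC (u v : V) : adj u v = adj v u.
Proof.
case: u => [[[i j]|[p b]]|]; case: v => [[[i' j']|[p' b']]|] //=.
  case: (i =P i') => [e|ne]; case: (i' =P i) => [e'|ne'] //.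
  - by subst i'; rewrite (eq_irrelevance e' erefl) cyc_multC.
  - by case: ne'; rewrite e.
  - by case: ne; rewrite e'.
by rewrite eq_sym (eq_sym b).
Qed.

Lemma card_Gstar_vert : #|V| = (ncyc + q * 2).+1.
Proof. by rewrite card_option card_sum card_prod card_ord card_bool. Qed.

Lemma sum_adj_K2 p b :
  (\sum_(x : 'I_q * bool) adj (Some (inr (p, b))) (Some (inr x)) = 1)%N.
Proof.
rewrite (bigD1 (p, ~~ b)) //= eqxx /= big1 ?addn0; first by case: b.
move=> [p' b']; rewrite xpair_eqE /=.
by case: (p =P p') => [<-|] //=; rewrite eqxx /=; case: b; case: b'.
Qed.

Hypothesis s_ge2 : forall i, (2 <= s i)%N.

Lemma sum_adj_cycle i (j : 'I_(s i)) :
  (\sum_(x : {i : 'I_t & 'I_(s i)}) adj (Some (inl (existT _ i j))) (Some (inl x)) = 2)%N.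
Proof.
transitivity (\sum_(i' < t) \sum_(j' : 'I_(s i'))
    adj (Some (inl (existT _ i j))) (Some (inl (existT _ i' j'))))%N.
  by rewrite sig_big_dep; apply: eq_bigr => -[].
rewrite (bigD1 i) //= [X in (_ + X)%N]big1 ?addn0.
  by case: (i =P i) => [e|//]; rewrite (eq_irrelevance e erefl) sum_cyc_mult.
move=> i' ne_i'i; apply: big1 => j' _ /=.
by case: (i =P i') => [e|//]; rewrite e eqxx in ne_i'i.
Qed.

Definition class_weight {R : nmodType} (a b c : R) (v : V) : R :=
  match v with None => a | Some (inl _) => b | Some (inr _) => c end.

Lemma sum_class_weight_adj (R : pzSemiRingType) (a b c : R) (v : V) :
  \sum_u class_weight a b c u * (adj v u)%:R =
  match v with
  | None => b *+ ncyc + c *+ (q * 2)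
  | Some (inl _) => a + b *+ 2
  | Some (inr _) => a + c
  end.
Proof.
have adj_apex x : adj (Some x) None = 1%N by case: x => [[]|[]].
rewrite big_option big_sumType /= -!mulr_sumr -!natr_sum.
case: v => [[[i j]|[p b']]|].
- rewrite adj_apex sum_adj_cycle big1 => [|[] //].
  by rewrite mulr1 mulr0 addr0 mulr_natr.
- rewrite adj_apex sum_adj_K2 big1 => [|[] //].
  by rewrite mulr1 mulr0 add0r mulr1.
- rewrite (_ : adj None None = 0%N) ?mulr0 ?add0r; last exact: erefl.
  rewrite (eq_bigr (fun _ => 1%N)) // (eq_bigr (fun _ => 1%N)) // !sum1_card.
  by rewrite !mulr_natr card_prod card_ord card_bool.
Qed.

Definition Gstar_poly (R : nzRingType) : {poly R} :=
  'X^3 - (#|V| + 7)%:R *: 'X^2 + (7 * #|V| + 8)%:R *: 'X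
  + ((4 * q + 12)%:R - (12 * #|V|)%:R)%:P.

Lemma horner_Gstar_poly (R : comNzRingType) (y : R) :
  (Gstar_poly R).[y] = (y - 5) * (y - 3) * (y - (ncyc + q * 2)%:R)
                       - ncyc%:R * (y - 3) - (q * 2)%:R * (y - 5).
Proof.
rewrite /Gstar_poly !(hornerD, hornerN, hornerZ, hornerXn, hornerX, hornerC).
rewrite card_Gstar_vert; ring.
Qed.

(* With apex weight a, cycle weight b and K_2 weight c, the eigen-equations at
   cycle and K_2 vertices read a + 5 b = y b and a + 3 c = y c; the one at the
   apex is then [horner_Gstar_poly]. *)
Definition Gstar_eigvec {R : nzRingType} (y : R) : 'rV[R]_#|V| :=
  \row_i class_weight ((y - 5) * (y - 3)) (y - 3) (y - 5) (enum_val i).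

Lemma Gstar_eigvecP (R : comNzRingType) (y : R) : root (Gstar_poly R) y ->
  Gstar_eigvec y *m Qmx R adj = y *: Gstar_eigvec y.
Proof.
move=> /rootP p_y; apply/rowP => j; rewrite row_mul_Qmx; last exact: Gstar_adjC.
have deg v : (\sum_u adj v u)%:R = \sum_u class_weight 1 1 1 u * (adj v u)%:R :> R.
  by rewrite natr_sum; apply: eq_bigr => -[[]|] *; rewrite mul1r.
rewrite deg !sum_class_weight_adj !mxE.
case: (enum_val j) => [[]|] /= *.
- ring.
- ring.
- by rewrite -[RHS]subr0 -{}p_y horner_Gstar_poly; ring.
Qed.

Lemma Gstar_eigvec_gt0 (R : realFieldType) (y : R) :
  5 < y -> forall i, 0 < Gstar_eigvec y 0 i.
Proof.
move=> y_gt5 i; rewrite mxE.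
by case: (enum_val i) => [[]|] * /=; [lra | lra | apply: mulr_gt0; lra].
Qed.

Lemma Gstar_root_eigenvalue (R : realFieldType) (y : R) :
  5 < y -> root (Gstar_poly R) y -> eigenvalue (Qmx R adj) y.
Proof.
move=> y_gt5 p_y; apply/eigenvalueP; exists (Gstar_eigvec y).
  exact: Gstar_eigvecP.
by apply/rV0Pn; exists (enum_rank None); rewrite gt_eqF ?Gstar_eigvec_gt0.
Qed.

Lemma ncyc_gt0 : (0 < t)%N -> (0 < ncyc)%N.
Proof.
move=> t_gt0; apply/card_gt0P.
by exists (existT _ (Ordinal t_gt0) (Ordinal (ltnW (s_ge2 _)))).
Qed.

Lemma Gstar_poly_root_gt5 (R : rcfType) :
  (0 < t)%N -> exists2 r : R, 5 < r & root (Gstar_poly R) r.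
Proof.
move=> /ncyc_gt0; rewrite -(ltr0n R) => ncyc_gt0.
pose c : R := ncyc%:R; pose d : R := (q * 2)%:R.
have d_ge0 : 0 <= d by rewrite ler0n.
have p5 : (Gstar_poly R).[5] = - 2 * c by rewrite horner_Gstar_poly; ring.
have [r /andP[r_ge5 _] p_r] : exists2 r, 5 <= r <= c + d + 8 & root (Gstar_poly R) r.
  apply: poly_ivt; first by lra.
  rewrite p5 horner_Gstar_poly natrD -/c -/d; apply/andP; split; nra.
exists r => //; rewrite lt_neqAle r_ge5 andbT; apply: contraTneq p_r => <-.
by rewrite /root p5; apply/eqP; lra.
Qed.
End Gstar.

Theorem lemma3p3 (R : rcfType) (t q : nat) (s : 'I_t -> nat)
  (ht : (1 <= t)%N) (hq : (1 <= q)%N) (hs : forall i, (2 <= s i)%N) :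
  let n := #|Gstar_vert s q| in
  let p : {poly R} :=
    'X^3 - (n + 7)%:R *: 'X^2 + (7 * n + 8)%:R *: 'X
    + ((4 * q + 12)%:R - (12 * n)%:R)%:P in
  exists sigma1 : R,
    largest_eigenvalue (Qmx R (@Gstar_adj t s q)) sigma1 /\ largest_root p sigma1.
Proof.
move=> n p; have [r r_gt5 p_r] := Gstar_poly_root_gt5 t q s hs R ht.
have le_r y : eigenvalue (Qmx R (@Gstar_adj t s q)) y -> y <= r.
  exact: nonneg_mx_eigenvalue_le (@Qmx_ge0 _ _ _) (Gstar_eigvec_gt0 _ _ _ _ _ r_gt5)
    (Gstar_eigvecP _ _ _ hs _ _ p_r).
exists r; split; split=> //; first exact: Gstar_root_eigenvalue.
move=> y p_y; have [y_le5|y_gt5] := lerP y 5.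
  by rewrite (le_trans y_le5) // ltW.
exact/le_r/Gstar_root_eigenvalue.
Qed.
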